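(* Let $d\ge1$, $N_1,\ldots,N_d\ge1$, and $p_j,q_j:\{0,\ldots,N_j\}\to[0,1]$ with $p_j(0)=q_j(0)=p_j(N_j)=q_j(N_j)=0$ and $\sum_k(p_k(i_k)+q_k(i_k))\le1$ on $\mathbb E=\{1,\ldots,N_1\}\times\cdots\times\{1,\ldots,N_d\}$. Let $\mathbf P_Z$ be the substochastic matrix on $\mathbb E$ with $\mathbf P_Z(\mathbf i,\mathbf i+\mathbf s_j)=p_j(i_j)$, $\mathbf P_Z(\mathbf i,\mathbf i-\mathbf s_j)=q_j(i_j)$ (when $\mathbf i\pm\mathbf s_j\in\mathbb E$), $\mathbf P_Z(\mathbf i,\mathbf i)=1-\sum_{k=1}^d(p_k(i_k)+q_k(i_k))$, and $0$ otherwise. Let $\preceq$ be the coordinatewise order on $\mathbb E$, $\mathbf C(\mathbf i,\mathbf i')=\mathbf 1(\mathbf i\preceq\mathbf i')$. Then $\mathbf P_X:=\mathbf C\mathbf P_Z^T\mathbf C^{-1}$ is given by $\mathbf P_X(\mathbf i,\mathbf i+\mathbf s_j)=q_j(i_j)$ (for $i_j<N_j$), $\mathbf P_X(\mathbf i,\mathbf i-\mathbf s_j)=p_j(i_j-1)$ (for $i_j>1$), $\mathbf P_X(\mathbf i,\mathbf i)=1-\sum_{k=1}^d\big(p_k(i_k-1)+q_k(i_k)\big)$, and $\mathbf P_X(\mathbf i,\mathbf i')=0$ for all other $\mathbf i'$.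
   Context: $\mathbf i=(i_1,\ldots,i_d)$, $\mathbf s_j$ is the $j$-th unit vector, $\mathbf i\preceq\mathbf i'$ iff $i_j\le i'_j$ for all $j$. *)

From HB Require Import structures.
From mathcomp Require Import all_boot all_order all_algebra.
Set Implicit Arguments. Unset Strict Implicit. Unset Printing Implicit Defensive.
Import Order.TTheory GRing.Theory Num.Theory.
Local Open Scope ring_scope.

(* The state space E = {1..N_1} x ... x {1..N_d}.  An element x : stateE N
   stores, in coordinate j, an ordinal x j : 'I_(N j); the actual coordinate
   i_j in {1,..,N_j} is  crd x j = (x j).+1. *)
Definition stateE (d : nat) (N : 'I_d -> nat) : finType :=
  {dffun forall j : 'I_d, 'I_(N j)}.

Definition crd d (N : 'I_d -> nat) (x : stateE N) (j : 'I_d) : nat :=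
  (nat_of_ord (x j)).+1.

Definition is_up d (N : 'I_d -> nat) (x y : stateE N) (j : 'I_d) : bool :=
  [forall k, crd y k == crd x k + (k == j)]%N.
Definition is_down d (N : 'I_d -> nat) (x y : stateE N) (j : 'I_d) : bool :=
  [forall k, crd y k + (k == j) == crd x k]%N.

Section Kernels.
Variables (R : realFieldType) (d : nat) (N : 'I_d -> nat)
  (p q : 'I_d -> nat -> R).

Definition PZ (x y : stateE N) : R :=
  if x == y then 1 - \sum_(k < d) (p k (crd x k) + q k (crd x k))
  else \sum_(j < d) ((if is_up x y j then p j (crd x j) else 0)
                   + (if is_down x y j then q j (crd x j) else 0)).

Definition PX (x y : stateE N) : R :=
  if x == y then 1 - \sum_(k < d) (p k (crd x k).-1 + q k (crd x k))
  else \sum_(j < d) ((if is_up x y j then q j (crd x j) else 0)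
                   + (if is_down x y j then p j (crd x j).-1 else 0)).

Definition Cker (x y : stateE N) : R :=
  if [forall k, crd x k <= crd y k]%N then 1 else 0.
End Kernels.

Definition mx_of (R : nzRingType) (T : finType) (f : T -> T -> R)
  : 'M[R]_#|T| :=
  \matrix_(a < #|T|, b < #|T|) f (enum_val a) (enum_val b).

From HB Require Import structures.
From mathcomp Require Import all_boot all_order all_algebra zify ring.
Import Order.TTheory GRing.Theory Num.Theory.
Local Open Scope ring_scope.
Set Implicit Arguments. Unset Strict Implicit.

(* C is unitriangular for the weight i |-> i_1 + ... + i_d, hence invertible,
   and it remains to show C P_Z^T = P_X C entrywise.  Both P_Z and P_X are
   nearest-neighbour kernels; composing C with a jump by +-s_j only shifts the
   order constraint on coordinate j, so both sides become sums over j of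
   one-dimensional expressions in (x_j, y_j), which agree term by term. *)

Section MatrixOfKernel.
Variable T : finType.

Lemma sum_enum_val (R : nzRingType) (F : T -> R) :
  \sum_(a < #|T|) F (enum_val a) = \sum_z F z.
Proof. by rewrite -(big_enum_val (A := T)); apply: eq_bigl => z; rewrite inE. Qed.

Lemma eq_mx_of (R : nzRingType) (f g : T -> T -> R) :
  (forall x y, f x y = g x y) -> mx_of f = mx_of g.
Proof. by move=> fg; apply/matrixP => a b; rewrite !mxE fg. Qed.

Lemma trmx_mx_of (R : nzRingType) (f : T -> T -> R) :
  (mx_of f)^T = mx_of (fun x y => f y x).
Proof. by apply/matrixP => a b; rewrite !mxE. Qed.

Lemma mulmx_mx_of (R : nzRingType) (f g : T -> T -> R) :
  mx_of f *m mx_of g = mx_of (fun x y => \sum_z f x z * g z y).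
Proof.
apply/matrixP => a b; rewrite !mxE -sum_enum_val.
by apply: eq_bigr => c _; rewrite !mxE.
Qed.

Lemma mx_of_unitmx (R : fieldType) (f : T -> T -> R) (w : T -> nat) :
  (forall x, f x x = 1) ->
  (forall x y, x != y -> f x y != 0 -> (w x < w y)%N) ->
  mx_of f \in unitmx.
Proof.
move=> f1 f_tri; rewrite unitmxE unitfE; apply/det0P => -[v nzv vf].
case/eqP: nzv; pose c x := v ord0 (enum_rank x).
have c_ker y : \sum_z c z * f z y = 0.
  transitivity ((v *m mx_of f) ord0 (enum_rank y)); last by rewrite vf mxE.
  rewrite -(sum_enum_val (fun z => c z * f z y)) mxE.
  by apply: eq_bigr => a _; rewrite /c enum_valK mxE enum_rankK.
have c0 n y : (w y < n)%N -> c y = 0.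
  elim: n y => [//|n IH] y; rewrite ltnS => wy.
  have := c_ker y; rewrite (bigD1 y) //= f1 mulr1 big1 ?addr0 // => z zy.
  have [->|fz] := eqVneq (f z y) 0; first by rewrite mulr0.
  by rewrite IH ?mul0r // (leq_trans (f_tri _ _ zy fz)).
apply/rowP => i; rewrite mxE -(enum_valK i).
have -> : (0 : 'I_1) = ord0 by exact/val_inj.
exact: (c0 (w (enum_val i)).+1).
Qed.

End MatrixOfKernel.

(* The j-th coordinate of the intertwining identity, a = x_j, b = y_j; the
   boundary values p_j(0) = p_j(N_j) = 0 cancel the terms that would need a
   jump out of {1, ..., N_j}. *)
Lemma coordinate_balance (R : comNzRingType) (pj qj : nat -> R) (n a b : nat) (o : bool) :
  (0 < a <= n)%N -> (0 < b <= n)%N -> pj 0%N = 0 -> pj n = 0 ->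
  (if (b < n)%N && ((a <= b + 1)%N && o) then pj b else 0)
  + (if (1 < b)%N && ((a <= b - 1)%N && o) then qj b else 0)
  - (if (a <= b)%N && o then 1 else 0) * (pj b + qj b)
  = (if (a < n)%N && ((a + 1 <= b)%N && o) then qj a else 0)
  + (if (1 < a)%N && ((a - 1 <= b)%N && o) then pj a.-1 else 0)
  - (qj a + pj a.-1) * (if (a <= b)%N && o then 1 else 0).
Proof.
move=> a_bd b_bd p0 pn; case: o; last by rewrite !andbF mul0r mulr0 !subr0 !addr0.
rewrite !andbT.
have -> : ((1 < b) && (a <= b - 1))%N = (a < b)%N by lia.
have -> : ((a < n) && (a + 1 <= b))%N = (a < b)%N by lia.
have -> : (if (b < n)%N && (a <= b + 1)%N then pj b else 0)
        = if (a <= b + 1)%N then pj b else 0.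
  by case: ltnP => //= bn; case: ifP => // _; rewrite (_ : b = n) //; lia.
have -> : (if (1 < a)%N && (a - 1 <= b)%N then pj a.-1 else 0)
        = if (a <= b + 1)%N then pj a.-1 else 0.
  rewrite (_ : (a - 1 <= b)%N = (a <= b + 1)%N); last by lia.
  by case: (ltnP 1 a) => //= a1; case: ifP => // _; rewrite (_ : a = 1%N) //; lia.
case: (ltngtP a b) => ab.
- by rewrite !ifT; try lia; ring.
- rewrite mul0r mulr0 !subr0 !add0r !addr0.
  by case: (ltnP (b + 1) a) => // ba; rewrite (_ : a.-1 = b) //; lia.
- by subst a; rewrite !ifT; try lia; ring.
Qed.

Lemma forallb_split (T : finType) (P : pred T) j :
  [forall k, P k] = P j && [forall k, (k != j) ==> P k].
Proof.
apply/forallP/andP => [P_all|[Pj /forallP P_other] k].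
  by split=> //; apply/forallP => k; apply/implyP.
by case: (eqVneq k j) => [->//|kj]; apply: (implyP (P_other k)).
Qed.

Section StateSpace.
Variables (d : nat) (N : 'I_d -> nat).
Implicit Types (x y z : stateE N) (j k : 'I_d).

Lemma crd_bounds x k : (0 < crd x k <= N k)%N.
Proof. by rewrite /crd ltn_ord. Qed.

Lemma crd_inj x y : (forall k, crd x k = crd y k) -> x = y.
Proof. by move=> xy; apply/ffunP => k; apply/val_inj; case: (xy k). Qed.

Definition shift_up y j : stateE N :=
  [ffun k => insubd (y k) (y k + (k == j))%N].
Definition shift_down y j : stateE N :=
  [ffun k => insubd (y k) (y k - (k == j))%N].

Lemma crd_shift_up y j k :
  (crd y j < N j)%N -> crd (shift_up y j) k = (crd y k + (k == j))%N.
Proof.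
rewrite /crd /shift_up ffunE val_insubd => yj.
by case: (eqVneq k j) => [->|_] /=; rewrite ?addn1 ?yj // !addn0 ltn_ord.
Qed.

Lemma crd_shift_down y j k :
  (1 < crd y j)%N -> crd (shift_down y j) k = (crd y k - (k == j))%N.
Proof.
rewrite /crd /shift_down ffunE val_insubd => yj; have := ltn_ord (y k).
case: (eqVneq k j) => [->|_] /= yk; last by rewrite !subn0 yk.
by case: (y j) yj yk => a /= *; rewrite ifT; lia.
Qed.

Lemma is_upxx y j : is_up y y j = false.
Proof. by apply/negbTE/forallP => /(_ j) /eqP; rewrite eqxx; lia. Qed.

Lemma is_downxx y j : is_down y y j = false.
Proof. by apply/negbTE/forallP => /(_ j) /eqP; rewrite eqxx; lia. Qed.

Lemma is_up_shift_up y z j :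
  (crd y j < N j)%N -> is_up y z j = (z == shift_up y j).
Proof.
move=> yj; apply/forallP/eqP => [yz|-> k]; last by rewrite crd_shift_up.
by apply/crd_inj => k; rewrite crd_shift_up //; apply/eqP/yz.
Qed.

Lemma is_down_shift_down y z j :
  (1 < crd y j)%N -> is_down y z j = (z == shift_down y j).
Proof.
move=> yj; apply/forallP/eqP => [yz|-> k].
  apply/crd_inj => k; rewrite crd_shift_down //.
  by move/eqP: (yz k); rewrite /crd; case: (_ == _); lia.
by rewrite crd_shift_down //; apply/eqP; rewrite /crd; case: (_ == _); lia.
Qed.

Lemma sum_is_up (R : nzRingType) (f : stateE N -> R) y j :
  \sum_z (if is_up y z j then f z else 0)
  = if (crd y j < N j)%N then f (shift_up y j) else 0.
Proof.
case: ifP => yj.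
  rewrite (bigD1 (shift_up y j)) ?is_up_shift_up ?eqxx //= big1 ?addr0 // => z.
  by rewrite is_up_shift_up // => /negbTE->.
apply: big1 => z _; case: ifP => // /forallP /(_ j) /eqP.
by rewrite eqxx; have := crd_bounds z j; lia.
Qed.

Lemma sum_is_down (R : nzRingType) (f : stateE N -> R) y j :
  \sum_z (if is_down y z j then f z else 0)
  = if (1 < crd y j)%N then f (shift_down y j) else 0.
Proof.
case: ifP => yj.
  rewrite (bigD1 (shift_down y j)) ?is_down_shift_down ?eqxx //= big1 ?addr0 // => z.
  by rewrite is_down_shift_down // => /negbTE->.
apply: big1 => z _; case: ifP => // /forallP /(_ j) /eqP.
by rewrite eqxx; have := crd_bounds z j; lia.
Qed.


Definition le_except x y j := [forall k, (k != j) ==> (crd x k <= crd y k)%N].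

Lemma forall_crd_split x y j (F : nat -> nat -> bool -> bool) :
  (forall a b, F a b false = (a <= b)%N) ->
  [forall k, F (crd x k) (crd y k) (k == j)]
  = F (crd x j) (crd y j) true && le_except x y j.
Proof.
move=> F_le; rewrite (forallb_split _ j) eqxx; congr andb.
by apply: eq_forallb => k; case: eqVneq => //= _; rewrite F_le.
Qed.

Lemma forall_le_split x y j :
  [forall k, crd x k <= crd y k]%N = (crd x j <= crd y j)%N && le_except x y j.
Proof. exact: (@forall_crd_split x y j (fun a b _ => a <= b)%N). Qed.

Lemma forall_le_addl_split x y j :
  [forall k, crd x k <= crd y k + (k == j)]%N
  = (crd x j <= crd y j + 1)%N && le_except x y j.
Proof. by apply: (@forall_crd_split x y j (fun a b t => a <= b + t)%N) => a b; rewrite addn0. Qed.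

Lemma forall_le_subl_split x y j :
  [forall k, crd x k <= crd y k - (k == j)]%N
  = (crd x j <= crd y j - 1)%N && le_except x y j.
Proof. by apply: (@forall_crd_split x y j (fun a b t => a <= b - t)%N) => a b; rewrite subn0. Qed.

Lemma forall_le_addr_split x y j :
  [forall k, crd x k + (k == j) <= crd y k]%N
  = (crd x j + 1 <= crd y j)%N && le_except x y j.
Proof. by apply: (@forall_crd_split x y j (fun a b t => a + t <= b)%N) => a b; rewrite addn0. Qed.

Lemma forall_le_subr_split x y j :
  [forall k, crd x k - (k == j) <= crd y k]%N
  = (crd x j - 1 <= crd y j)%N && le_except x y j.
Proof. by apply: (@forall_crd_split x y j (fun a b t => a - t <= b)%N) => a b; rewrite subn0. Qed.

Variable R : realFieldType.

Lemma sum_Cker_is_up x y j (c : R) :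
  \sum_z Cker R x z * (if is_up y z j then c else 0)
  = if (crd y j < N j)%N && ((crd x j <= crd y j + 1)%N && le_except x y j)
    then c else 0.
Proof.
under eq_bigr do rewrite (fun_if (fun t => _ * t)) mulr0.
rewrite sum_is_up; case: ifP => //= yj.
rewrite /Cker (eq_forallb (fun k => congr1 (fun t => crd x k <= t)%N (crd_shift_up k yj))).
by rewrite forall_le_addl_split; case: ifP; rewrite ?mul1r ?mul0r.
Qed.

Lemma sum_Cker_is_down x y j (c : R) :
  \sum_z Cker R x z * (if is_down y z j then c else 0)
  = if (1 < crd y j)%N && ((crd x j <= crd y j - 1)%N && le_except x y j)
    then c else 0.
Proof.
under eq_bigr do rewrite (fun_if (fun t => _ * t)) mulr0.
rewrite sum_is_down; case: ifP => //= yj.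
rewrite /Cker (eq_forallb (fun k => congr1 (fun t => crd x k <= t)%N (crd_shift_down k yj))).
by rewrite forall_le_subl_split; case: ifP; rewrite ?mul1r ?mul0r.
Qed.

Lemma sum_is_up_Cker x y j (c : R) :
  \sum_z (if is_up x z j then c else 0) * Cker R z y
  = if (crd x j < N j)%N && ((crd x j + 1 <= crd y j)%N && le_except x y j)
    then c else 0.
Proof.
under eq_bigr do rewrite (fun_if (fun t => t * _)) mul0r.
rewrite sum_is_up; case: ifP => //= xj.
rewrite /Cker (eq_forallb (fun k => congr1 (fun t => t <= crd y k)%N (crd_shift_up k xj))).
by rewrite forall_le_addr_split; case: ifP; rewrite ?mulr1 ?mulr0.
Qed.

Lemma sum_is_down_Cker x y j (c : R) :
  \sum_z (if is_down x z j then c else 0) * Cker R z y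
  = if (1 < crd x j)%N && ((crd x j - 1 <= crd y j)%N && le_except x y j)
    then c else 0.
Proof.
under eq_bigr do rewrite (fun_if (fun t => t * _)) mul0r.
rewrite sum_is_down; case: ifP => //= xj.
rewrite /Cker (eq_forallb (fun k => congr1 (fun t => t <= crd y k)%N (crd_shift_down k xj))).
by rewrite forall_le_subr_split; case: ifP; rewrite ?mulr1 ?mulr0.
Qed.

Definition nn_kernel (u v : 'I_d -> nat -> R) x y : R :=
  (if x == y then 1 - \sum_(k < d) (u k (crd x k) + v k (crd x k)) else 0)
  + \sum_(j < d) ((if is_up x y j then u j (crd x j) else 0)
                 + (if is_down x y j then v j (crd x j) else 0)).

Lemma nn_kernelE u v x y :
  nn_kernel u v x y =
  if x == y then 1 - \sum_(k < d) (u k (crd x k) + v k (crd x k))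
  else \sum_(j < d) ((if is_up x y j then u j (crd x j) else 0)
                    + (if is_down x y j then v j (crd x j) else 0)).
Proof.
rewrite /nn_kernel; case: eqP => [<-|_]; last by rewrite add0r.
by rewrite [X in _ + X]big1 ?addr0 // => j _; rewrite is_upxx is_downxx addr0.
Qed.

Lemma PZ_nn_kernel (p q : 'I_d -> nat -> R) x y : PZ p q x y = nn_kernel p q x y.
Proof. by rewrite nn_kernelE. Qed.

Lemma PX_nn_kernel (p q : 'I_d -> nat -> R) x y :
  PX p q x y = nn_kernel q (fun j i => p j i.-1) x y.
Proof.
rewrite nn_kernelE /PX; case: (x == y) => //.
by congr (_ - _); apply: eq_bigr => k _; rewrite addrC.
Qed.

Lemma sum_Cker_nn_kernel u v x y :
  \sum_z Cker R x z * nn_kernel u v y z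
  = Cker R x y * (1 - \sum_(k < d) (u k (crd y k) + v k (crd y k)))
  + \sum_(j < d)
      ((if (crd y j < N j)%N && ((crd x j <= crd y j + 1)%N && le_except x y j)
        then u j (crd y j) else 0)
     + (if (1 < crd y j)%N && ((crd x j <= crd y j - 1)%N && le_except x y j)
        then v j (crd y j) else 0)).
Proof.
under eq_bigr do rewrite mulrDr mulr_sumr.
rewrite big_split /= exchange_big /=; congr (_ + _).
  rewrite (bigD1 y) //= eqxx [X in _ + X = _]big1 ?addr0 // => z.
  by rewrite eq_sym => /negbTE->; rewrite mulr0.
apply: eq_bigr => j _.
by under eq_bigr do rewrite mulrDr; rewrite big_split /= sum_Cker_is_up sum_Cker_is_down.
Qed.

Lemma sum_nn_kernel_Cker u v x y :
  \sum_z nn_kernel u v x z * Cker R z y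
  = (1 - \sum_(k < d) (u k (crd x k) + v k (crd x k))) * Cker R x y
  + \sum_(j < d)
      ((if (crd x j < N j)%N && ((crd x j + 1 <= crd y j)%N && le_except x y j)
        then u j (crd x j) else 0)
     + (if (1 < crd x j)%N && ((crd x j - 1 <= crd y j)%N && le_except x y j)
        then v j (crd x j) else 0)).
Proof.
under eq_bigr do rewrite mulrDl mulr_suml.
rewrite big_split /= exchange_big /=; congr (_ + _).
  rewrite (bigD1 x) //= eqxx [X in _ + X = _]big1 ?addr0 // => z.
  by rewrite eq_sym => /negbTE->; rewrite mul0r.
apply: eq_bigr => j _.
by under eq_bigr do rewrite mulrDl; rewrite big_split /= sum_is_up_Cker sum_is_down_Cker.
Qed.

Lemma Cker_PZ_PX (p q : 'I_d -> nat -> R) :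
  (forall j, p j 0%N = 0) -> (forall j, p j (N j) = 0) ->
  forall x y, \sum_z Cker R x z * PZ p q y z = \sum_z PX p q x z * Cker R z y.
Proof.
move=> p0 pN x y.
under eq_bigr do rewrite PZ_nn_kernel.
under [RHS]eq_bigr do rewrite PX_nn_kernel.
rewrite sum_Cker_nn_kernel sum_nn_kernel_Cker /=.
rewrite mulrBr mulr1 mulrBl mul1r mulr_sumr mulr_suml -!addrA; congr (_ + _).
rewrite addrC -sumrB [RHS]addrC -sumrB; apply: eq_bigr => j _.
rewrite /Cker (forall_le_split _ _ j).
exact: coordinate_balance (crd_bounds x j) (crd_bounds y j) (p0 j) (pN j).
Qed.

Lemma sum_crd_lt x y :
  [forall k, crd x k <= crd y k]%N -> x != y ->
  (\sum_(k < d) crd x k < \sum_(k < d) crd y k)%N.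
Proof.
move=> /forallP xy_le xy.
have [k xy_lt] : exists k, (crd x k < crd y k)%N.
  apply/existsP; apply: contraNT xy; rewrite negb_exists => /forallP xy_ge.
  by apply/eqP/crd_inj => k; have := xy_le k; have := xy_ge k; rewrite -leqNgt; lia.
rewrite (bigD1 k) // [X in (_ < X)%N](bigD1 k) //=.
by apply: leq_add xy_lt _; apply: leq_sum => i _; apply: xy_le.
Qed.

Lemma Cker_unitmx : mx_of (@Cker R d N) \in unitmx.
Proof.
apply: (mx_of_unitmx (w := fun x => \sum_(k < d) crd x k)) => [x|x y xy].
  by rewrite /Cker ifT //; apply/forallP.
by rewrite /Cker; case: ifP => [x_le _|_]; [apply: sum_crd_lt | rewrite eqxx].
Qed.

End StateSpace.

Unset Implicit Arguments. Set Strict Implicit.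

Theorem mainTheorem4 (R : realFieldType) (d : nat) (N : 'I_d -> nat)
  (p q : 'I_d -> nat -> R) :
  (0 < d)%N ->
  (forall j, 0 < N j)%N ->
  (forall j k, (k <= N j)%N -> 0 <= p j k <= 1) ->
  (forall j k, (k <= N j)%N -> 0 <= q j k <= 1) ->
  (forall j, p j 0%N = 0 /\ q j 0%N = 0 /\ p j (N j) = 0 /\ q j (N j) = 0) ->
  (forall x : stateE N, \sum_(k < d) (p k (crd x k) + q k (crd x k)) <= 1) ->
  let C := mx_of (@Cker R d N) in
  C \in unitmx /\
  C *m (mx_of (PZ p q))^T *m invmx C = mx_of (PX p q).
Proof.
move=> _ _ _ _ pq_boundary _ C.
have C_unit : C \in unitmx by apply: Cker_unitmx.
split=> //.
have p0 j : p j 0%N = 0 by case: (pq_boundary j).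
have pN j : p j (N j) = 0 by case: (pq_boundary j) => _ [_ []].
suff -> : C *m (mx_of (PZ p q))^T = mx_of (PX p q) *m C by rewrite mulmxK.
by rewrite trmx_mx_of !mulmx_mx_of; apply: eq_mx_of; apply: Cker_PZ_PX.
Qed.
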